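(* Let $\Delta\in\mathbb F^{m\times m}$ be a connection matrix with column/row partition $J_0,\dots,J_b$. Let $\Delta^0,\dots,\Delta^m$ be produced by the Incremental Sweeping Algorithm (ISA) applied to $\Delta$ and $\widetilde\Delta^0,\dots,\widetilde\Delta^{m-1}$ by the Row Cancellation Algorithm (RCA) applied to $\Delta$. Then for every $r=1,\dots,m-1$, the set of positions marked as primary pivots at iteration $r$ is the same in both algorithms, and for every position $(i,j)$ marked as a primary pivot at some iteration $\le r$ one has $\Delta^r_{ij}=\widetilde\Delta^r_{ij}$.
   Context: Throughout, $\mathbb F$ is a field and $m\ge1$. $U^{pq}$ is the $m\times m$ matrix whose only nonzero entry is a $1$ in position $(p,q)$. Superscripts on matrices are indices, not powers. A connection matrix (over $\mathbb F$) is a matrix $\Delta\in\mathbb F^{m\times m}$ together with a partition $\{1,\dots,m\}=J_0\sqcup\cdots\sqcup J_b$ (the column/row partition; the $J_k$ need not consist of consecutive integers) such that $\Delta$ is upper triangular, $\Delta\Delta=0$, and $\Delta_{ij}=0$ unless $i<j$ and $(i,j)\in\bigcup_{k=1}^bJ_{k-1}\times J_k$. For $1\le r\le m-1$ the $r$-th diagonal is $\{(j-r,j):r<j\le m\}$. Incremental Sweeping Algorithm (ISA) applied to a connection matrix $\Delta$: set $\Delta^0=\Delta^1=\Delta$. For $r=1,\dots,m-1$ in turn: (Markup) for every position $(j-r,j)$ on the $r$-th diagonal with $\Delta^r_{j-r,j}\ne0$ such that no position in column $j$ was marked as a primary pivot at an earlier iteration: if some position $(j-r,p)$ of row $j-r$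 was marked as a primary pivot at an earlier iteration, mark $(j-r,j)$ as a change-of-basis pivot of iteration $r$; otherwise mark $(j-r,j)$ permanently as a primary pivot (marked at iteration $r$). (Update) Let $T^r=I-\sum \frac{\Delta^r_{j-r,j}}{\Delta^r_{j-r,p}}U^{pj}$, the sum running over all change-of-basis pivots $(j-r,j)$ of iteration $r$, where $(j-r,p)$ is the primary pivot position in row $j-r$; set $\Delta^{r+1}=(T^r)^{-1}\Delta^rT^r$. Row Cancellation Algorithm (RCA) applied to a connection matrix $\Delta$: set $\widetilde\Delta^0=\widetilde\Delta^1=\Delta$. For $r=1,\dots,m-1$ in turn: (Markup) mark permanently as a primary pivot (marked at iteration $r$) every position $(j-r,j)$ on the $r$-th diagonal with $\widetilde\Delta^r_{j-r,j}\ne0$ such that no position of column $j$ was marked as a primary pivot at an earlier iteration. (Update, only for $r\le m-2$) If no position was marked at iteration $r$, put $\widetilde T^r=I$; otherwise let $j_1<\cdots<j_t$ be the columns of the positions marked at iteration $r$, let $\widetilde T^{r,s}=I-\sum_{q=j_s+1}^m\frac{\widetilde\Delta^r_{j_s-r,q}}{\widetilde\Delta^r_{j_s-r,j_s}}U^{j_sq}$ and $\widetilde T^r=\widetilde T^{r,1}\cdots\widetilde T^{r,t}$. Set $\widetilde\Delta^{r+1}=(\widetilde T^r)^{-1}\widetilde\Delta^r\widetilde T^r$. *)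

From HB Require Import structures.
From mathcomp Require Import all_boot all_order all_algebra.
Set Implicit Arguments. Unset Strict Implicit. Unset Printing Implicit Defensive.
Import Order.TTheory GRing.Theory Num.Theory.
Local Open Scope ring_scope.

(* Indices are 0-based ('I_m); the r-th diagonal is {(i,j) | j = i + r}.     *)
(* A marking function mk : 'I_m -> 'I_m -> nat records primary pivots:       *)
(* mk i j = 0 means (i,j) is not a primary pivot, mk i j = k > 0 means it was *)
(* marked as a primary pivot at iteration k.                                  *)

Section Algorithms.
Variables (F : fieldType) (m : nat).

Definition marking := 'I_m -> 'I_m -> nat.
Definition no_marks : marking := fun _ _ => 0%N.

Definition on_diag (r : nat) (i j : 'I_m) : bool := (i + r)%N == j.

Definition col_free (mk : marking) (j : 'I_m) : bool := [forall i, mk i j == 0%N].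
Definition row_has_pivot (mk : marking) (i : 'I_m) : bool := [exists p, mk i p != 0%N].
Definition pivot_col (mk : marking) (i : 'I_m) : 'I_m := odflt i [pick p | mk i p != 0%N].

Definition isa_cand r (D : 'M[F]_m) mk i j :=
  [&& on_diag r i j, D i j != 0 & col_free mk j].
Definition isa_primary r D mk i j := isa_cand r D mk i j && ~~ row_has_pivot mk i.
Definition isa_cob r D mk i j := isa_cand r D mk i j && row_has_pivot mk i.

Definition isa_T r (D : 'M[F]_m) (mk : marking) : 'M[F]_m :=
  1%:M - \sum_(i : 'I_m) \sum_(j : 'I_m | isa_cob r D mk i j)
           (D i j / D i (pivot_col mk i)) *: delta_mx (pivot_col mk i) j.

Definition isa_step r (st : 'M[F]_m * marking) : 'M[F]_m * marking :=
  let: (D, mk) := st in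
  let T := isa_T r D mk in
  (invmx T *m D *m T,
   fun i j => if mk i j != 0%N then mk i j
              else if isa_primary r D mk i j then r else 0%N).

(* isa D n = (Delta^{n+1}, primary-pivot marks of iterations 1..n) *)
Fixpoint isa (D : 'M[F]_m) (n : nat) : 'M[F]_m * marking :=
  match n with
  | 0 => (D, no_marks)
  | n'.+1 => isa_step n'.+1 (isa D n')
  end.

(* Delta^r, for r >= 1 *)
Definition isa_mx (D : 'M[F]_m) (r : nat) : 'M[F]_m := (isa D r.-1).1.
Definition isa_marks (D : 'M[F]_m) (r : nat) : marking := (isa D r).2.

Definition rca_primary r (D : 'M[F]_m) mk i j :=
  [&& on_diag r i j, D i j != 0 & col_free mk j].

Definition rca_Tcol r (D : 'M[F]_m) mk (j : 'I_m) : 'M[F]_m :=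
  1%:M - \sum_(i : 'I_m | rca_primary r D mk i j) \sum_(q : 'I_m | (j < q)%N)
           (D i q / D i j) *: delta_mx j q.

(* product over the marked columns j_1 < ... < j_t, in increasing order *)
Definition rca_T r (D : 'M[F]_m) mk : 'M[F]_m :=
  \big[mulmx/1%:M]_(j : 'I_m | [exists i, rca_primary r D mk i j]) rca_Tcol r D mk j.

Definition rca_step r (st : 'M[F]_m * marking) : 'M[F]_m * marking :=
  let: (D, mk) := st in
  let T := rca_T r D mk in
  (invmx T *m D *m T,
   fun i j => if mk i j != 0%N then mk i j
              else if rca_primary r D mk i j then r else 0%N).

Fixpoint rca (D : 'M[F]_m) (n : nat) : 'M[F]_m * marking :=
  match n with
  | 0 => (D, no_marks)
  | n'.+1 => rca_step n'.+1 (rca D n')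
  end.

(* tilde Delta^r, for 1 <= r <= m-1 (uses only updates 1..r-1 <= m-2) *)
Definition rca_mx (D : 'M[F]_m) (r : nat) : 'M[F]_m := (rca D r.-1).1.
Definition rca_marks (D : 'M[F]_m) (r : nat) : marking := (rca D r).2.

(* part i = k means i belongs to J_k, k = 0..b *)
Definition is_connection_matrix (b : nat) (D : 'M[F]_m) (part : 'I_m -> 'I_b.+1) : Prop :=
  [/\ (forall k : 'I_b.+1, exists i : 'I_m, part i = k),
      (forall i j : 'I_m, (j < i)%N -> D i j = 0),
      D *m D = 0
    & (forall i j : 'I_m, D i j != 0 ->
         (i < j)%N /\ (nat_of_ord (part j) = (part i).+1)%N)].

End Algorithms.

From HB Require Import structures.
From mathcomp Require Import all_boot all_order all_algebra zify.
Set Implicit Arguments. Unset Strict Implicit. Unset Printing Implicit Defensive.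
Import GRing.Theory.
Local Open Scope ring_scope.

(* Both algorithms only conjugate by upper unitriangular matrices, so at every
   stage the ISA matrix and the RCA matrix are conjugate by an upper
   unitriangular matrix.  Before iteration [r] both are swept: unmarked columns
   vanish on and below the [r]-th diagonal, and every primary pivot is the
   lowest nonzero entry (the low) of its column, lows being distinct.  In a
   lower-left corner where lows are distinct, the lows and their entries are
   invariant under unitriangular conjugation (induction over the columns).  This
   makes the candidates and the pivot entries of both algorithms coincide; the
   one difference between them, change-of-basis pivots of ISA, never arises in
   RCA, whose rows with a pivot have been cleared on all unmarked columns. *)

Section Unitriangular.
Variables (F : fieldType) (m : nat).
Implicit Types (A B M T X Y : 'M[F]_m) (a b i j k p q : 'I_m).

Definition unitrig A := (forall a, A a a = 1) /\ (forall a b, (b < a)%N -> A a b = 0).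

Lemma ord_ltn_eqF a b : (a < b)%N -> (a == b) = false.
Proof. exact: ltn_eqF. Qed.

Lemma ord_gtn_eqF a b : (b < a)%N -> (a == b) = false.
Proof. exact: gtn_eqF. Qed.

Lemma sumr_mul_eqr (G : 'I_m -> F) p : \sum_k G k * (k == p)%:R = G p.
Proof. by rewrite (bigD1 p) //= eqxx mulr1 big1 ?addr0 // => k /negPf->; rewrite mulr0. Qed.

Lemma sumr_eq_mull (G : 'I_m -> F) p : \sum_k (p == k)%:R * G k = G p.
Proof. by rewrite -(sumr_mul_eqr G p); apply: eq_bigr => k _; rewrite mulrC eq_sym. Qed.

Lemma sumr_mul_andr_eq (Q : pred 'I_m) (G : 'I_m -> F) (x : bool) b :
  \sum_(j | Q j) G j * (x && (b == j))%:R = if Q b then G b * x%:R else 0.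
Proof.
case: ifP => Qb.
  rewrite (bigD1 b) //= eqxx andbT big1 ?addr0 // => j /andP[_ jb].
  by rewrite eq_sym (negPf jb) andbF mulr0.
by rewrite big1 // => j Qj; case: eqP => [bj|]; [rewrite bj Qj in Qb | rewrite andbF mulr0].
Qed.

Lemma sumr_pred_unique (Q : pred 'I_m) (G : 'I_m -> F) (i0 : 'I_m) :
  Q i0 -> (forall i, Q i -> i = i0) -> \sum_(i | Q i) G i = G i0.
Proof. by move=> Q0 U; apply: big_pred1 => i; apply/idP/eqP => [/U|->]. Qed.

Lemma big_mulmx_id_row (I : eqType) (s : seq I) (Q : pred I) (f : I -> 'M[F]_m) a :
  (forall x, x \in s -> Q x -> forall b, f x a b = (a == b)%:R) ->
  forall b, (\big[mulmx/1%:M]_(x <- s | Q x) f x) a b = (a == b)%:R.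
Proof.
move=> fa; rewrite big_seq_cond.
apply: (big_ind (fun X : 'M[F]_m => forall b, X a b = (a == b)%:R)) => [b|X Y Xa Ya b|x /andP[]].
- by rewrite mxE.
- by rewrite mxE (eq_bigr (fun k => (a == k)%:R * Y k b)) ?sumr_eq_mull // => k _; rewrite Xa.
- exact: fa.
Qed.

Lemma unitrig1 : unitrig 1%:M.
Proof. by split=> [a|a b ba]; rewrite mxE ?eqxx // ord_gtn_eqF. Qed.

Lemma mulmx_unitrigr n (Y : 'M[F]_(n, m)) X (i : 'I_n) b : unitrig X ->
  (Y *m X) i b = Y i b + \sum_(k < m | (k < b)%N) Y i k * X k b.
Proof.
case=> Xd Xl; rewrite mxE (bigD1 b) //= Xd mulr1; congr (_ + _).
rewrite (bigID (fun k : 'I_m => (k < b)%N)) /= [X in _ + X]big1 ?addr0.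
  by apply: eq_bigl => k; rewrite andb_idl // => /ord_ltn_eqF ->.
move=> k /andP[kb]; rewrite -leqNgt => bk; rewrite Xl ?mulr0 //.
by rewrite ltn_neqAle bk andbT eq_sym.
Qed.

Lemma mulmx_unitrigl X Y a b : unitrig X ->
  (X *m Y) a b = Y a b + \sum_(k < m | (a < k)%N) X a k * Y k b.
Proof.
case=> Xd Xl; rewrite mxE (bigD1 a) //= Xd mul1r; congr (_ + _).
rewrite (bigID (fun k : 'I_m => (a < k)%N)) /= [X in _ + X]big1 ?addr0.
  by apply: eq_bigl => k; rewrite andb_idl // => /ord_gtn_eqF ->.
move=> k /andP[ka]; rewrite -leqNgt => kl; rewrite Xl ?mul0r //.
by rewrite ltn_neqAle kl andbT.
Qed.

Lemma unitrig_mul X Y : unitrig X -> unitrig Y -> unitrig (X *m Y).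
Proof.
move=> uX uY; split=> [a|a b ba]; rewrite mulmx_unitrigr //.
  by rewrite big1 ?addr0 ?uX.1 // => k ka; rewrite uX.2 // mul0r.
rewrite uX.2 // add0r big1 // => k kb.
by rewrite uX.2 ?mul0r // (ltn_trans kb ba).
Qed.

Lemma unitrig_unit X : unitrig X -> X \in unitmx.
Proof.
move=> [Xd Xl]; rewrite unitmxE -det_tr det_trig.
  by rewrite big1 ?unitr1 // => i _; rewrite mxE Xd.
by apply/is_trig_mxP => i j ij; rewrite mxE Xl.
Qed.

Lemma unitrig_inv X : unitrig X -> unitrig (invmx X).
Proof.
move=> uX; set B := invmx X.
have BXE a b : B a b + \sum_(k < m | (k < b)%N) B a k * X k b = (a == b)%:R.
  by rewrite -mulmx_unitrigr // mulVmx ?unitrig_unit // mxE.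
have lowB a b : (b < a)%N -> B a b = 0.
  move: {2}(val b) (erefl (val b)) => n; elim/ltn_ind: n b => n IHn b bn ba.
  have := BXE a b; rewrite ord_gtn_eqF // big1 ?addr0 // => k kb.
  by rewrite (IHn k) ?mul0r // ?(ltn_trans kb ba) // -bn.
split=> // a; have := BXE a a; rewrite big1 ?addr0 ?eqxx // => k ka.
by rewrite lowB ?mul0r.
Qed.

Definition unitrig_similar (M1 M2 : 'M[F]_m) := exists2 A, unitrig A & M2 *m A = A *m M1.

Lemma unitrig_similar_conj M1 M2 T1 T2 : unitrig T1 -> unitrig T2 ->
  unitrig_similar M1 M2 -> unitrig_similar (invmx T1 *m M1 *m T1) (invmx T2 *m M2 *m T2).
Proof.
move=> u1 u2 [A uA E]; exists (invmx T2 *m A *m T1).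
  by apply: unitrig_mul => //; apply: unitrig_mul => //; apply: unitrig_inv.
rewrite !mulmxA !mulmxK ?unitrig_unit //.
by rewrite -[invmx T2 *m M2 *m A]mulmxA E !mulmxA.
Qed.

End Unitriangular.

Section Lows.
Variables (F : fieldType) (m : nat).
Implicit Types (B M X Y : 'M[F]_m) (a b c k : 'I_m).

Definition is_low M c a := M a c != 0 /\ forall a', (a < a')%N -> M a' c = 0.

Definition col_vanishes_from (i0 : nat) M c := forall a, (i0 <= a)%N -> M a c = 0.

Definition low_injective (i0 j0 : nat) M := forall c1 c2 a,
  (c1 <= j0)%N -> (c2 <= j0)%N -> (i0 <= a)%N -> is_low M c1 a -> is_low M c2 a -> c1 = c2.

Lemma unitrig_mulmx_vanish B X c (s : nat) : unitrig B ->
  (forall b, (s <= b)%N -> X b c = 0) -> forall b, (s <= b)%N -> (B *m X) b c = 0.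
Proof.
move=> uB Xz b sb; rewrite mulmx_unitrigl // Xz // add0r big1 // => k bk.
by rewrite Xz ?mulr0 // (leq_trans sb (ltnW bk)).
Qed.

Lemma unitrig_mulmx_low B X c a : unitrig B ->
  (forall b, (a < b)%N -> X b c = 0) -> (B *m X) a c = X a c.
Proof.
by move=> uB Xz; rewrite mulmx_unitrigl // big1 ?addr0 // => k ak; rewrite Xz ?mulr0.
Qed.

Lemma sum_single_low (i0 j0 : nat) Y B c b k : low_injective i0 j0 Y ->
  (c <= j0)%N -> (i0 <= b)%N -> (k < c)%N -> B k c != 0 -> Y b k != 0 ->
  (forall b', (b < b')%N -> forall k', (k' < c)%N -> B k' c != 0 -> Y b' k' = 0) ->
  forall b', (b <= b')%N ->
  \sum_(k' < m | (k' < c)%N) Y b' k' * B k' c = if b' == b then Y b k * B k c else 0.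
Proof.
move=> injY cj ib kc Bk Ybk below b' bb'; case: eqP => [->|/eqP neb].
  rewrite (bigD1 k) //= big1 ?addr0 // => k' /andP[k'c nk'].
  have [->|Bk'] := eqVneq (B k' c) 0; first by rewrite mulr0.
  have [->|Ybk'] := eqVneq (Y b k') 0; first by rewrite mul0r.
  have lowk (k'' : 'I_m) : (k'' < c)%N -> B k'' c != 0 -> Y b k'' != 0 -> is_low Y k'' b.
    by move=> k''c Bk'' Ybk''; split=> // a' ba'; apply: below.
  have lowk' := lowk k' k'c Bk' Ybk'; have lowk0 := lowk k kc Bk Ybk.
  by move: nk'; rewrite (injY k' k b) ?eqxx //; lia.
rewrite big1 // => k' k'c; have [->|Bk'] := eqVneq (B k' c) 0; first by rewrite mulr0.
by rewrite below ?mul0r // ltn_neqAle bb' andbT eq_sym.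
Qed.

Section UnitrigConjugation.
Variables (B X Y : 'M[F]_m) (i0 j0 : nat).
Hypotheses (uB : unitrig B) (YB : Y *m B = B *m X).
Hypothesis injY : low_injective i0 j0 Y.

Lemma conj_unitrig_colE b c :
  Y b c = (B *m X) b c - \sum_(k < m | (k < c)%N) Y b k * B k c.
Proof. by rewrite -YB mulmx_unitrigr // addrK. Qed.

(* Descending induction on [b]: the lowest nonzero [Y b k] with [k < c] and
   [B k c != 0] would also make [b] the low of column [c] of [Y]. *)
Lemma conj_unitrig_clear c (t : nat) : (c <= j0)%N -> (i0 <= t)%N ->
  (forall b, (t < b)%N -> (B *m X) b c = 0) ->
  (forall b, b = t :> nat -> (B *m X) b c != 0 -> forall k, (k < c)%N -> ~ is_low Y k b) ->
  forall b, (t <= b)%N -> forall k, (k < c)%N -> B k c != 0 -> Y b k = 0.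
Proof.
move=> cj it BXz hk b; move: {2}(m - b)%N (erefl (m - b)%N) => d.
elim/ltn_ind: d b => d IHd b db tb k kc Bk.
have below b' : (b < b')%N -> forall k', (k' < c)%N -> B k' c != 0 -> Y b' k' = 0.
  move=> bb'; have b'm := ltn_ord b'; apply: (IHd (m - b')%N) => //; lia.
apply/eqP; apply: contraT => Ybk.
have lowk : is_low Y k b by split=> // a' ba'; apply: below.
have ib : (i0 <= b)%N by lia.
have sumE := sum_single_low injY cj ib kc Bk Ybk below.
have BXb : (B *m X) b c = 0.
  have [tb'|bt] := ltnP t b; first exact: BXz.
  have bE : b = t :> nat by lia.
  by apply/eqP; apply: contraT => nzBX; case: (hk b bE nzBX k kc lowk).
have lowc : is_low Y c b.
  split; first by rewrite conj_unitrig_colE BXb sumE // eqxx sub0r oppr_eq0 mulf_neq0.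
  move=> a' ba'; have ta' : (t < a')%N by lia.
  by rewrite conj_unitrig_colE BXz // sumE ?(ltnW ba') // ord_gtn_eqF // subr0.
have ck := injY cj (ltnW (leq_trans kc cj)) ib lowc lowk.
by rewrite ck ltnn in kc.
Qed.

Lemma conj_unitrig_cleared_col c (t : nat) :
  (forall b, (t <= b)%N -> forall k, (k < c)%N -> B k c != 0 -> Y b k = 0) ->
  forall b, (t <= b)%N -> Y b c = (B *m X) b c.
Proof.
move=> Z b tb; rewrite conj_unitrig_colE big1 ?subr0 // => k kc.
by have [->|Bk] := eqVneq (B k c) 0; [rewrite mulr0 | rewrite (Z b tb k kc Bk) mul0r].
Qed.

Lemma conj_unitrig_vanish c : (c <= j0)%N ->
  col_vanishes_from i0 X c -> col_vanishes_from i0 Y c.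
Proof.
move=> cj Xz; have BXz := unitrig_mulmx_vanish uB Xz.
have Z := conj_unitrig_clear cj (leqnn i0) (fun b ib => BXz b (ltnW ib)).
move=> b ib; rewrite (conj_unitrig_cleared_col _ ib) ?BXz //.
by apply: Z => b' b'E; rewrite BXz ?eqxx // b'E.
Qed.

Hypothesis injX : low_injective i0 j0 X.

Lemma conj_unitrig_low c : (c <= j0)%N ->
  (forall k a, (k < c)%N -> (i0 <= a)%N -> is_low Y k a -> is_low X k a) ->
  forall a, (i0 <= a)%N -> is_low X c a -> is_low Y c a /\ Y a c = X a c.
Proof.
move=> cj IH a ia [Xa Xb]; have BXz := unitrig_mulmx_vanish uB Xb.
have Z : forall b, (a <= b)%N -> forall k, (k < c)%N -> B k c != 0 -> Y b k = 0.
  apply: conj_unitrig_clear => // b bE _ k kc lk.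
  have ba : b = a by apply: val_inj.
  rewrite ba in lk; have := injX (ltnW (leq_trans kc cj)) cj ia (IH k a kc ia lk) (conj Xa Xb).
  by move=> E; rewrite E ltnn in kc.
have YX := conj_unitrig_cleared_col Z.
have Yac : Y a c = X a c by rewrite YX // unitrig_mulmx_low.
split=> //; split; first by rewrite Yac.
by move=> a' aa'; rewrite YX ?(ltnW aa') // BXz.
Qed.

End UnitrigConjugation.

Lemma conj_unitrig_lows (i0 j0 : nat) (A M1 M2 : 'M[F]_m) :
  unitrig A -> M2 *m A = A *m M1 -> low_injective i0 j0 M1 -> low_injective i0 j0 M2 ->
  forall c, (c <= j0)%N ->
  forall a, (i0 <= a)%N -> is_low M1 c a -> is_low M2 c a /\ M2 a c = M1 a c.
Proof.
move=> uA E inj1 inj2.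
have uA' := unitrig_inv uA; have AU := unitrig_unit uA.
have E' : M1 *m invmx A = invmx A *m M2.
  have : invmx A *m (M2 *m A) *m invmx A = invmx A *m (A *m M1) *m invmx A by rewrite E.
  by rewrite !mulmxA mulVmx // mul1mx -!mulmxA mulmxV // mulmx1.
suff H c : (c <= j0)%N ->
    (forall a, (i0 <= a)%N -> is_low M1 c a -> is_low M2 c a /\ M2 a c = M1 a c) /\
    (forall a, (i0 <= a)%N -> is_low M2 c a -> is_low M1 c a /\ M1 a c = M2 a c).
  by move=> c /H[].
move: {2}(c : nat) (erefl (c : nat)) => n; elim/ltn_ind: n c => n IHn c cn cj.
split; [apply: (conj_unitrig_low uA E inj2 inj1 cj) | apply: (conj_unitrig_low uA' E' inj1 inj2 cj)]
  => k a kc ia lk; have [L1 L2] := IHn k (ltac:(lia)) k erefl (ltac:(lia)).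
- by case: (L2 a ia lk).
- by case: (L1 a ia lk).
Qed.

Lemma conj_unitrig_corner_eq (A M1 M2 : 'M[F]_m) (i0 j0 : 'I_m) :
  unitrig A -> M2 *m A = A *m M1 -> low_injective i0 j0 M1 -> low_injective i0 j0 M2 ->
  (forall a, (i0 < a)%N -> M1 a j0 = 0) -> M1 i0 j0 = M2 i0 j0.
Proof.
move=> uA E inj1 inj2 z1; have [z|nz] := eqVneq (M1 i0 j0) 0; last first.
  by case: (conj_unitrig_lows uA E inj1 inj2 (leqnn j0) (leqnn i0) (conj nz z1)) => _ ->.
have Ez : col_vanishes_from i0 M1 j0.
  move=> a; rewrite leq_eqVlt => /orP[/eqP ia|]; last exact: z1.
  by have -> : a = i0 by apply: val_inj.
by rewrite z (conj_unitrig_vanish uA E inj2 (leqnn j0) Ez (leqnn i0)).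
Qed.

End Lows.

Section Sweeping.
Variables (F : fieldType) (m : nat).
Implicit Types (M T : 'M[F]_m) (mk : marking m) (P : 'I_m -> 'I_m -> bool).
Implicit Types (a b c i j k p q : 'I_m).

Lemma col_freeP mk j : reflect (forall i, mk i j = 0%N) (col_free mk j).
Proof. by apply: (iffP forallP) => H i; apply/eqP. Qed.

Lemma pivot_col_marked mk i : row_has_pivot mk i -> mk i (pivot_col mk i) != 0%N.
Proof.
by case/existsP=> p hp; rewrite /pivot_col; case: pickP => [q ->|/(_ p)]; rewrite ?hp.
Qed.

Lemma marked_row_has_pivot mk i p : mk i p != 0%N -> row_has_pivot mk i.
Proof. by move=> h; apply/existsP; exists p. Qed.

Definition mark_step mk P (r : nat) : marking m :=
  fun i j => if mk i j != 0%N then mk i j else if P i j then r else 0%N.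

Lemma mark_step_neq0 mk P r i j : (0 < r)%N ->
  (mark_step mk P r i j != 0%N) = (mk i j != 0%N) || (mk i j == 0%N) && P i j.
Proof.
rewrite /mark_step => r0; case: (mk i j =P 0%N) => [->|/eqP nz] /=; last by rewrite nz.
by case: (P i j) => //=; rewrite -lt0n.
Qed.

Lemma col_free_mark_step mk P r j : (0 < r)%N ->
  col_free (mark_step mk P r) j -> col_free mk j /\ forall i, ~~ P i j.
Proof.
rewrite /mark_step => r0 /col_freeP H; split.
  by apply/col_freeP => i; move: (H i); case: (mk i j).
move=> i; move: (H i); case: (mk i j) => [|k] //=.
by case: (P i j) => // e; rewrite e in r0.
Qed.

(* The state of either algorithm before iteration [r]. *)
Definition swept M mk (r : nat) :=
 [/\ (forall j, col_free mk j -> forall a, (j < a + r)%N -> M a j = 0),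
     (forall i p, mk i p != 0%N -> is_low M p i),
     (forall i p, mk i p != 0%N -> (i + mk i p)%N = p /\ (0 < mk i p < r)%N),
     (forall i p q, mk i p != 0%N -> mk i q != 0%N -> p = q) &
     (forall i i' p, mk i p != 0%N -> mk i' p != 0%N -> i = i')].

Lemma swept_low_cases M mk r i0 j0 c a : swept M mk r -> (j0 <= i0 + r)%N ->
  (c <= j0)%N -> (i0 <= a)%N -> is_low M c a ->
  (c = j0 /\ col_free mk c) \/ mk a c != 0%N.
Proof.
case=> Ia Ib _ _ _ jr cj ia [Mac Mb].
have [cf|/forallPn[i /= hi]] := boolP (col_free mk c).
  left; split=> //; apply: ord_inj; apply/eqP; rewrite eqn_leq cj /= leqNgt.
  by apply/negP => cj'; move: Mac; rewrite Ia ?eqxx //; lia.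
right; have [Mic Mib] := Ib i c hi.
suff -> : a = i by [].
apply: ord_inj; apply/eqP; rewrite eqn_leq; apply/andP; split; rewrite leqNgt; apply/negP.
  by move=> ia'; move: Mac; rewrite Mib ?eqxx.
by move=> ia'; move: Mic; rewrite Mb ?eqxx.
Qed.

Lemma swept_low_injective M mk r i0 j0 : swept M mk r -> (j0 <= i0 + r)%N ->
  (forall p, mk i0 p != 0%N -> p = j0) -> low_injective i0 j0 M.
Proof.
move=> sw jr hrow c1 c2 a c1j c2j ia l1 l2; have [Ia _ _ Ir _] := sw.
have mixed c : is_low M j0 a -> col_free mk j0 -> mk a c != 0%N -> False.
  move=> [Maj _] fj hac; have ai : a = i0.
    apply: ord_inj; apply/eqP; rewrite eqn_leq ia andbT leqNgt; apply/negP => ia'.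
    by move: Maj; rewrite Ia ?eqxx //; lia.
  rewrite ai in hac; have cj := hrow c hac.
  by move/col_freeP: fj => /(_ i0); rewrite -cj; move/eqP: hac.
case: (swept_low_cases sw jr c1j ia l1) => [[e1 f1]|h1];
  case: (swept_low_cases sw jr c2j ia l2) => [[e2 f2]|h2].
- by rewrite e1 e2.
- by case: (mixed c2); rewrite -?e1.
- by case: (mixed c1); rewrite -?e2.
- exact: Ir h1 h2.
Qed.

Lemma swept_vanish_below M mk r i0 j0 : swept M mk r -> (j0 <= i0 + r)%N ->
  col_free mk j0 \/ mk i0 j0 != 0%N -> forall a, (i0 < a)%N -> M a j0 = 0.
Proof.
case=> Ia Ib _ _ _ jr [fj|h] a ia; first by apply: Ia => //; lia.
exact: (Ib _ _ h).2.
Qed.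

Lemma unitrig_conj_entry T M a b : unitrig T ->
  (invmx T *m M *m T) a b = (M *m T) a b + \sum_(k < m | (a < k)%N) invmx T a k * (M *m T) k b.
Proof. by move=> uT; rewrite -mulmxA; apply/mulmx_unitrigl/unitrig_inv. Qed.

Lemma unitrig_conj_vanish T M j (s : nat) : unitrig T ->
  (forall a, (s <= a)%N -> (M *m T) a j = 0) ->
  forall a, (s <= a)%N -> (invmx T *m M *m T) a j = 0.
Proof.
move=> uT Z a sa; rewrite unitrig_conj_entry // Z // add0r big1 // => k ak.
by rewrite Z ?mulr0 // (leq_trans sa (ltnW ak)).
Qed.

Lemma unitrig_conj_keep T M i p : unitrig T ->
  (forall a, (i <= a)%N -> (M *m T) a p = M a p) -> (forall a, (i < a)%N -> M a p = 0) ->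
  forall a, (i <= a)%N -> (invmx T *m M *m T) a p = M a p.
Proof.
move=> uT K Z a ia; rewrite unitrig_conj_entry // K // big1 ?addr0 // => k ak.
by rewrite K ?Z ?mulr0 //; lia.
Qed.

Definition new_pivots r M mk P := forall i j, P i j ->
  [/\ (i + r)%N = j, M i j != 0, col_free mk j & ~~ row_has_pivot mk i].

Lemma mark_step_row_unique r M mk P : (0 < r)%N -> swept M mk r -> new_pivots r M mk P ->
  forall i p q, mark_step mk P r i p != 0%N -> mark_step mk P r i q != 0%N -> p = q.
Proof.
move=> r0 [_ _ _ Ir _] Pf i p q; rewrite !mark_step_neq0 //.
case/orP=> [np|/andP[_ pp]]; case/orP=> [nq|/andP[_ pq]]; first exact: Ir np nq.
- by have [_ _ _] := Pf _ _ pq; rewrite (marked_row_has_pivot np).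
- by have [_ _ _] := Pf _ _ pp; rewrite (marked_row_has_pivot nq).
have [d1 _ _ _] := Pf _ _ pp; have [d2 _ _ _] := Pf _ _ pq; apply: val_inj => /=; lia.
Qed.

Lemma mark_step_col_unique r M mk P : (0 < r)%N -> swept M mk r -> new_pivots r M mk P ->
  forall i i' p, mark_step mk P r i p != 0%N -> mark_step mk P r i' p != 0%N -> i = i'.
Proof.
move=> r0 [_ _ _ _ Icl] Pf i i' p; rewrite !mark_step_neq0 //.
case/orP=> [np|/andP[_ pp]]; case/orP=> [nq|/andP[_ pq]]; first exact: Icl np nq.
- by have [_ _ /col_freeP/(_ i) mp _] := Pf _ _ pq; rewrite mp in np.
- by have [_ _ /col_freeP/(_ i') mq _] := Pf _ _ pp; rewrite mq in nq.
have [d1 _ _ _] := Pf _ _ pp; have [d2 _ _ _] := Pf _ _ pq; apply: val_inj => /=; lia.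
Qed.

Lemma swept_step r M mk T P : (0 < r)%N -> swept M mk r -> unitrig T ->
  new_pivots r M mk P ->
  (forall j, col_free mk j -> (forall i, ~~ P i j) ->
      forall a, (j < a + r.+1)%N -> (M *m T) a j = 0) ->
  (forall i p, (mk i p != 0%N) || P i p -> forall a, (i <= a)%N -> (M *m T) a p = M a p) ->
  swept (invmx T *m M *m T) (mark_step mk P r) r.+1.
Proof.
move=> r0 sw uT Pf Tfree Tkeep; have [Ia Ib Ic _ _] := sw; split.
- move=> j /(col_free_mark_step r0)[fj np] a ja.
  by apply: (@unitrig_conj_vanish T M j (j - r)) => // [b jb|]; [apply: Tfree => //|]; lia.
- move=> i p; rewrite mark_step_neq0 // => h.
  have [nz below] : is_low M p i.
    case/orP: h => [old|/andP[_ pr]]; first exact: Ib.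
    by have [d nz fp _] := Pf _ _ pr; split=> // a ia; apply: Ia => //; lia.
  have h' : (mk i p != 0%N) || P i p by case/orP: h => [->|/andP[_ ->]]; rewrite ?orbT.
  have K := unitrig_conj_keep uT (Tkeep i p h') below.
  split=> [|a ia]; first by rewrite K.
  by rewrite K ?below // ltnW.
- move=> i p; rewrite /mark_step; case: (mk i p =P 0%N) => [_|/eqP nz] /=.
    by case pr: (P i p) => // _; have [d _ _ _] := Pf _ _ pr; split=> //; lia.
  by move=> _; have [e /andP[l1 l2]] := Ic _ _ nz; split=> //; rewrite l1 /=; lia.
- exact: mark_step_row_unique r0 sw Pf.
- exact: mark_step_col_unique r0 sw Pf.
Qed.

(** * The Incremental Sweeping Algorithm *)

Lemma isa_T_entry r M mk k b : isa_T r M mk k b = (k == b)%:R -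
  \sum_(i | isa_cob r M mk i b) (M i b / M i (pivot_col mk i)) * (k == pivot_col mk i)%:R.
Proof.
rewrite !mxE summxE [in RHS]big_mkcond; congr (_ - _); apply: eq_bigr => i _.
rewrite summxE -(sumr_mul_andr_eq _ (fun j => M i j / M i (pivot_col mk i))).
by apply: eq_bigr => j _; rewrite !mxE.
Qed.

Lemma mulmx_isa_T r M mk a b : (M *m isa_T r M mk) a b =
  M a b - \sum_(i | isa_cob r M mk i b) (M i b / M i (pivot_col mk i)) * M a (pivot_col mk i).
Proof.
rewrite mxE (eq_bigr (fun k => M a k * (k == b)%:R - \sum_(i | isa_cob r M mk i b)
    M a k * ((M i b / M i (pivot_col mk i)) * (k == pivot_col mk i)%:R))); last first.
  by move=> k _; rewrite isa_T_entry mulrBr mulr_sumr.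
rewrite sumrB sumr_mul_eqr exchange_big /=; congr (_ - _); apply: eq_bigr => i _.
rewrite -(sumr_mul_eqr (fun k => M i b / M i (pivot_col mk i) * M a k)).
by apply: eq_bigr => k _; rewrite mulrCA mulrA.
Qed.

Lemma isa_cob_unique r M mk b i i' : isa_cob r M mk i b -> isa_cob r M mk i' b -> i' = i.
Proof.
move=> /andP[/and3P[/eqP d1 _ _] _] /andP[/and3P[/eqP d2 _ _] _].
by apply: ord_inj; lia.
Qed.

Lemma isa_cob_facts r M mk i b : swept M mk r -> isa_cob r M mk i b ->
  [/\ (i + r)%N = b, mk i (pivot_col mk i) != 0%N, (pivot_col mk i < b)%N,
      col_free mk b & M i b != 0].
Proof.
move=> [_ _ Ic _ _] /andP[/and3P[/eqP d Mib cf] /pivot_col_marked hp].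
by have [e /andP[_ lt]] := Ic _ _ hp; split=> //; lia.
Qed.

Lemma isa_T_unitrig r M mk : swept M mk r -> unitrig (isa_T r M mk).
Proof.
move=> sw; split=> [a|a b ba]; rewrite isa_T_entry ?eqxx ?ord_gtn_eqF // ?sub0r;
  rewrite big1 ?subr0 ?oppr0 // => i /(isa_cob_facts sw)[_ _ lt _ _];
  rewrite ord_gtn_eqF ?mulr0 //; lia.
Qed.

(* In column [j] the change-of-basis pivot [(a, j)] is cancelled against the
   primary pivot of row [a], which is the low of its column. *)
Lemma mulmx_isa_T_free r M mk j : swept M mk r ->
  col_free mk j -> (forall i, ~~ isa_primary r M mk i j) ->
  forall a, (j < a + r.+1)%N -> (M *m isa_T r M mk) a j = 0.
Proof.
move=> sw fj np a ja; have [Ia Ib _ _ _] := sw; rewrite mulmx_isa_T.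
have [/existsP[i0 c0]|/existsPn nc] := boolP [exists i, isa_cob r M mk i j].
  rewrite (@sumr_pred_unique _ _ (isa_cob r M mk ^~ j) _ _ c0 (fun i ci => isa_cob_unique c0 ci)).
  have [d hp plt _ Mij] := isa_cob_facts sw c0; have [Mip Mbelow] := Ib _ _ hp.
  have [->|ai] : a = i0 \/ (i0 < a)%N.
  - by case: (ltngtP i0 a) => [|?|/ord_inj]; [right|lia|left].
  - by rewrite divfK // subrr.
  by rewrite (Ia j fj a) ?(Mbelow a ai) ?mulr0 ?subr0 //; lia.
rewrite big_pred0 ?subr0; last by move=> i; apply/negbTE/nc.
have [lt|ge] := ltnP j (a + r); first exact: Ia.
apply/eqP; apply: contraT => Maj.
have cand : isa_cand r M mk a j by rewrite /isa_cand /on_diag Maj fj andbT; apply/eqP; lia.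
have [rp|nrp] := boolP (row_has_pivot mk a).
  by move: (nc a); rewrite /isa_cob cand rp.
by move: (np a); rewrite /isa_primary cand nrp.
Qed.

Lemma isa_new_pivots r M mk : new_pivots r M mk (isa_primary r M mk).
Proof. by move=> i j /andP[/and3P[/eqP d nz cf] rp]. Qed.

Lemma isa_step_marks r M mk : (isa_step r (M, mk)).2 = mark_step mk (isa_primary r M mk) r.
Proof. by []. Qed.

Lemma isa_step_swept r M mk : (0 < r)%N -> swept M mk r ->
  swept (isa_step r (M, mk)).1 (isa_step r (M, mk)).2 r.+1.
Proof.
move=> r0 sw; apply: swept_step => //.
- exact: isa_T_unitrig.
- exact: isa_new_pivots.
- by move=> j fj np a ja; apply: mulmx_isa_T_free.
move=> i p h a _; rewrite mulmx_isa_T big_pred0 ?subr0 // => i'.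
apply/negbTE/negP => /[dup] ci /(isa_cob_facts sw)[d _ _ /col_freeP fp _].
case/orP: h => [|pr]; first by rewrite fp.
have [d' _ _ nrp] := isa_new_pivots pr.
have ii : i' = i by apply: ord_inj; lia.
by move: ci; rewrite ii /isa_cob (negbTE nrp) andbF.
Qed.

(** * The Row Cancellation Algorithm *)

Definition rca_coef r M mk j q : F :=
  \sum_(i | rca_primary r M mk i j) (if (j < q)%N then M i q / M i j else 0).

Lemma rca_Tcol_entry r M mk j k q :
  rca_Tcol r M mk j k q = (k == q)%:R - (k == j)%:R * rca_coef r M mk j q.
Proof.
rewrite !mxE summxE /rca_coef mulr_sumr; congr (_ - _); apply: eq_bigr => i _.
rewrite summxE (eq_bigr (fun q' => (M i q' / M i j) * ((k == j) && (q == q'))%:R)).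
  by rewrite sumr_mul_andr_eq; case: ifP; rewrite ?mulr0 // mulrC.
by move=> q' _; rewrite !mxE.
Qed.

Lemma rca_Tcol_id_row r M mk j a b : a != j -> rca_Tcol r M mk j a b = (a == b)%:R.
Proof. by move=> ne; rewrite rca_Tcol_entry (negbTE ne) mul0r subr0. Qed.

Lemma rca_Tcol_unitrig r M mk j : unitrig (rca_Tcol r M mk j).
Proof.
have coef0 q : (q <= j)%N -> rca_coef r M mk j q = 0.
  by move=> qj; rewrite /rca_coef big1 // => i _; rewrite ltnNge qj.
split=> [a|a b ba]; rewrite rca_Tcol_entry.
  by rewrite eqxx; have [->|_] := eqVneq a j; rewrite ?mul0r ?coef0 // ?mulr0 subr0.
rewrite ord_gtn_eqF // sub0r; have [aj|_] := eqVneq a j; last by rewrite mul0r oppr0.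
by rewrite coef0 ?mulr0 ?oppr0 // -aj ltnW.
Qed.

Lemma mulmx_rca_Tcol r M mk (Z : 'M[F]_m) j x q :
  (Z *m rca_Tcol r M mk j) x q = Z x q - Z x j * rca_coef r M mk j q.
Proof.
rewrite mxE (eq_bigr (fun k => Z x k * (k == q)%:R - Z x k * (k == j)%:R * rca_coef r M mk j q)).
  by rewrite sumrB sumr_mul_eqr -mulr_suml sumr_mul_eqr.
by move=> k _; rewrite rca_Tcol_entry mulrBr mulrA.
Qed.

Definition rca_marked_col r M mk j := [exists i, rca_primary r M mk i j].

Lemma rca_primary_facts r M mk i j : rca_primary r M mk i j ->
  [/\ (i + r)%N = j, M i j != 0 & col_free mk j].
Proof. by case/and3P=> /eqP. Qed.

Lemma rca_marked_col_free r M mk j : rca_marked_col r M mk j -> col_free mk j.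
Proof. by case/existsP=> i /rca_primary_facts[]. Qed.

Lemma rca_coef_primary r M mk i j q : rca_primary r M mk i j -> (j < q)%N ->
  rca_coef r M mk j q = M i q / M i j.
Proof.
move=> pr jq; rewrite /rca_coef (@sumr_pred_unique _ _ (rca_primary r M mk ^~ j) _ _ pr) ?jq //.
move=> i' /rca_primary_facts[d' _ _]; have [d _ _] := rca_primary_facts pr.
by apply: ord_inj; lia.
Qed.

Lemma rca_T_unitrig r M mk : unitrig (rca_T r M mk).
Proof.
apply: big_ind => [|X Y|j _]; [exact: unitrig1 | exact: unitrig_mul | exact: rca_Tcol_unitrig].
Qed.

Lemma rca_T_id_row r M mk a : ~~ rca_marked_col r M mk a ->
  forall b, rca_T r M mk a b = (a == b)%:R.
Proof.
move=> nJ; apply: big_mulmx_id_row => j _ Jj b; apply: rca_Tcol_id_row.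
by apply: contraNneq nJ => ->.
Qed.

(* The factors of [rca_T] act on increasing columns, so once the factor for
   a primary pivot [(i, j)] has cleared row [i] to the right of [j], the later
   factors only subtract multiples of columns where row [i] already vanishes. *)
Lemma rca_Tcol_prod_clears r M mk (s : seq 'I_m) : swept M mk r ->
  sorted (fun a b : 'I_m => (a < b)%N) s -> forall Z : 'M[F]_m,
  (forall j i b, j \in s -> rca_primary r M mk i j -> Z i b = M i b) ->
  forall j i, j \in s -> rca_primary r M mk i j -> forall q, (j < q)%N ->
  (Z *m \big[mulmx/1%:M]_(k <- s | rca_marked_col r M mk k) rca_Tcol r M mk k) i q = 0.
Proof.
move=> [Ia _ _ _ _]; elim: s => [//|k s IH] /= srt Z hZ j i js pr q jq.
have ltn_tr : transitive (fun a b : 'I_m => (a < b)%N) by move=> ? ? ?; apply: ltn_trans.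
move: srt; rewrite (path_sortedE ltn_tr) => /andP[/allP allk srt].
rewrite big_cons; case Jk: (rca_marked_col r M mk k); last first.
  have js' : j \in s.
    move: js; rewrite inE => /orP[/eqP jk|//].
    by move: Jk; rewrite /rca_marked_col -jk => /existsPn /(_ i); rewrite pr.
  by apply: (IH srt Z _ j i js' pr q jq) => j' i' b j's; apply: hZ; rewrite inE j's orbT.
rewrite mulmxA; move: js; rewrite inE => /orP[/eqP jk|js]; last first.
  apply: (IH srt _ _ j i js pr q jq) => j' i' b j's pr'.
  have [d' _ _] := rca_primary_facts pr'; have /existsP[i'' /rca_primary_facts[_ _ fk]] := Jk.
  have kj' := allk j' j's.
  by rewrite mulmx_rca_Tcol !(hZ j') ?inE ?j's ?orbT // (Ia k fk i') ?mul0r ?subr0 //; lia.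
rewrite jk in pr jq; have [d Mik fk] := rca_primary_facts pr.
rewrite mxE big1 // => c _; have [kc|ck] := ltnP k c.
  rewrite mulmx_rca_Tcol (rca_coef_primary pr kc) !(hZ k) ?mem_head //.
  by rewrite [M i k * _]mulrC divfK // subrr mul0r.
rewrite big_mulmx_id_row ?ord_ltn_eqF ?mulr0 //; first exact: leq_ltn_trans ck jq.
move=> j' j's _ b; apply: rca_Tcol_id_row; apply: contraTneq (allk j' j's) => <-.
by rewrite -leqNgt.
Qed.

Lemma sorted_index_enum_ord : sorted (fun a b : 'I_m => (a < b)%N) (index_enum 'I_m).
Proof.
by rewrite /index_enum -enumT -(sorted_map (f := val) (e' := ltn)) val_enum_ord iota_ltn_sorted.
Qed.

Lemma rca_T_clears_row r M mk i j : swept M mk r -> rca_primary r M mk i j ->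
  forall q, (j < q)%N -> (M *m rca_T r M mk) i q = 0.
Proof.
move=> sw pr q jq.
exact: (rca_Tcol_prod_clears sw sorted_index_enum_ord _ (mem_index_enum j) pr jq).
Qed.

Lemma mulmx_rca_T_id r M mk a b :
  (forall k, (k < b)%N -> rca_marked_col r M mk k -> M a k = 0) ->
  (M *m rca_T r M mk) a b = M a b.
Proof.
move=> H; have uT := @rca_T_unitrig r M mk.
rewrite mulmx_unitrigr // big1 ?addr0 // => k kb.
case Jk: (rca_marked_col r M mk k); first by rewrite H ?mul0r.
by rewrite rca_T_id_row ?Jk // ord_ltn_eqF ?mulr0.
Qed.

(* The combined effect of the row cancellations of RCA: each row with a pivot,
   up to lower rows, vanishes on the unmarked columns. *)
Definition rows_cleared M mk := forall i p, mk i p != 0%N ->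
  exists v : 'rV[F]_m, [/\ v 0 i = 1, (forall a, (a < i)%N -> v 0 a = 0) &
     (forall q, col_free mk q -> (v *m M) 0 q = 0)].

Lemma rows_cleared_free r M mk i p q : swept M mk r -> rows_cleared M mk ->
  mk i p != 0%N -> col_free mk q -> (q <= i + r)%N -> M i q = 0.
Proof.
move=> [Ia _ _ _ _] cl nz fq qi; have [v [v1 v0 vM]] := cl i p nz.
have := vM q fq; rewrite mxE (bigD1 i) //= v1 mul1r big1 ?addr0 // => k ki.
have [lt|gt] := ltnP k i; first by rewrite v0 ?mul0r.
have ik : (i < k)%N by rewrite ltn_neqAle gt andbT eq_sym.
by rewrite (Ia q fq k) ?mulr0 //; lia.
Qed.

Lemma rca_new_pivots r M mk : swept M mk r -> rows_cleared M mk ->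
  new_pivots r M mk (rca_primary r M mk).
Proof.
move=> sw cl i j pr; have [d nz fj] := rca_primary_facts pr; split=> //.
apply/negP => /pivot_col_marked rp.
by move: nz; rewrite (rows_cleared_free sw cl rp fj) ?eqxx //; lia.
Qed.

Lemma rca_step_marks r M mk : (rca_step r (M, mk)).2 = mark_step mk (rca_primary r M mk) r.
Proof. by []. Qed.

Lemma rca_step_swept r M mk : (0 < r)%N -> swept M mk r -> rows_cleared M mk ->
  swept (rca_step r (M, mk)).1 (rca_step r (M, mk)).2 r.+1.
Proof.
move=> r0 sw cl; have [Ia _ Ic _ _] := sw; apply: swept_step => //.
- exact: rca_T_unitrig.
- exact: rca_new_pivots.
- move=> j fj np a ja; rewrite mulmx_rca_T_id => [|k kj /rca_marked_col_free fk]; last first.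
    by apply: Ia => //; lia.
  have [lt|ge] := ltnP j (a + r); first exact: Ia.
  apply/eqP; apply: contraT => Maj; move: (np a).
  by rewrite /rca_primary /on_diag Maj fj andbT => /negP[]; apply/eqP; lia.
move=> i p h a ia; rewrite mulmx_rca_T_id // => k kp /rca_marked_col_free fk.
apply: Ia => //; suff : (p <= i + r)%N by lia.
case/orP: h => [/Ic[e /andP[_ lt]]|/rca_primary_facts[d _ _]]; lia.
Qed.

Lemma rca_step_rows_cleared r M mk : (0 < r)%N -> swept M mk r -> rows_cleared M mk ->
  rows_cleared (rca_step r (M, mk)).1 (rca_step r (M, mk)).2.
Proof.
move=> r0 sw cl i p; have [Ia _ _ _ _] := sw; set T := rca_T r M mk.
have uT : unitrig T by apply: rca_T_unitrig.
rewrite rca_step_marks mark_step_neq0 // => /orP[old|/andP[/eqP mz pr]].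
  have [v [v1 v0 vM]] := cl i p old; exists (v *m T); split.
  - by rewrite mulmx_unitrigr // v1 big1 ?addr0 // => k ki; rewrite v0 ?mul0r.
  - move=> a ai; rewrite mulmx_unitrigr // v0 // add0r big1 // => k ka.
    by rewrite v0 ?mul0r // (ltn_trans ka ai).
  move=> q /(col_free_mark_step r0)[fq _] /=.
  rewrite !mulmxA mulmxK ?unitrig_unit // mulmx_unitrigr // vM // add0r big1 // => k kq.
  case Jk: (rca_marked_col r M mk k); first by rewrite (vM k (rca_marked_col_free Jk)) mul0r.
  by rewrite rca_T_id_row ?Jk // ord_ltn_eqF ?mulr0.
exists (row i T); split=> [|a ai|q /(col_free_mark_step r0)[fq np] /=].
- by rewrite mxE; case: uT.
- by rewrite mxE; case: uT => _ ->.
rewrite -row_mul !mulmxA mulmxV ?unitrig_unit // mul1mx mxE.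
have [d nz fp] := rca_primary_facts pr.
have [pq|qp] := ltnP p q; first exact: (rca_T_clears_row sw pr pq).
have qp' : (q < p)%N.
  rewrite ltn_neqAle qp andbT; apply: contraTneq (np i) => qpE.
  by rewrite negbK (_ : q = p) //; apply: ord_inj.
rewrite mulmx_rca_T_id => [|k kq /rca_marked_col_free fk]; apply: Ia => //; lia.
Qed.

(** * Comparison of the two algorithms *)

Lemma swept_corner_eq r M1 mk1 M2 mk2 i0 j0 :
  swept M1 mk1 r -> swept M2 mk2 r -> mk1 =2 mk2 -> unitrig_similar M1 M2 ->
  (j0 <= i0 + r)%N -> (forall p, mk1 i0 p != 0%N -> p = j0) ->
  col_free mk1 j0 \/ mk1 i0 j0 != 0%N -> M1 i0 j0 = M2 i0 j0.
Proof.
move=> sw1 sw2 E [A uA MA] jr hrow hcol.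
apply: (conj_unitrig_corner_eq uA MA).
- exact: swept_low_injective sw1 jr hrow.
- by apply: (swept_low_injective sw2 jr) => p; rewrite -E; apply: hrow.
- exact: swept_vanish_below sw1 jr hcol.
Qed.

Definition isa_rca_inv r (st1 st2 : 'M[F]_m * marking m) :=
  [/\ swept st1.1 st1.2 r, swept st2.1 st2.2 r, rows_cleared st2.1 st2.2,
      st1.2 =2 st2.2 & unitrig_similar st1.1 st2.1].

(* A candidate in a row that already has a pivot becomes a change-of-basis pivot
   in ISA, but such candidates do not exist in RCA since the row has been
   cleared; in a row without pivot the candidate entries agree. *)
Lemma isa_rca_primaryE r M1 mk1 M2 mk2 : isa_rca_inv r (M1, mk1) (M2, mk2) ->
  isa_primary r M1 mk1 =2 rca_primary r M2 mk2.
Proof.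
move=> [sw1 sw2 cl E sim] i j; rewrite /= in sw1 sw2 cl E sim.
have cfE : col_free mk1 j = col_free mk2 j by apply: eq_forallb => i'; rewrite E.
rewrite /isa_primary /isa_cand /rca_primary -cfE.
have [/eqP d|] := boolP (on_diag r i j) => //=; have [cf|] := boolP (col_free mk1 j) => /=;
  rewrite ?andbF //.
have jr : (j <= i + r)%N by rewrite -d.
have [rp|nrp] := boolP (row_has_pivot mk1 i).
  have hp := pivot_col_marked rp; rewrite E in hp.
  by rewrite (rows_cleared_free sw2 cl hp) ?eqxx ?andbF // -cfE.
rewrite andbT (swept_corner_eq sw1 sw2 E sim jr) //; last by left.
by move=> p hp; move: nrp; rewrite (marked_row_has_pivot hp).
Qed.

Lemma isa_rca_marks_step r M1 mk1 M2 mk2 : isa_rca_inv r (M1, mk1) (M2, mk2) ->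
  (isa_step r (M1, mk1)).2 =2 (rca_step r (M2, mk2)).2.
Proof.
move=> inv i j; have [_ _ _ /= E _] := inv.
by rewrite E (isa_rca_primaryE inv).
Qed.

Lemma isa_rca_inv_step r M1 mk1 M2 mk2 : (0 < r)%N ->
  isa_rca_inv r (M1, mk1) (M2, mk2) ->
  isa_rca_inv r.+1 (isa_step r (M1, mk1)) (rca_step r (M2, mk2)).
Proof.
move=> r0 inv; have [/= sw1 sw2 cl _ sim] := inv; split.
- exact: isa_step_swept.
- exact: rca_step_swept.
- exact: rca_step_rows_cleared.
- exact: isa_rca_marks_step.
- exact: unitrig_similar_conj (isa_T_unitrig sw1) (rca_T_unitrig r M2 mk2) sim.
Qed.

Lemma isa_rca_marked_entry r M1 mk1 M2 mk2 : (0 < r)%N ->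
  isa_rca_inv r (M1, mk1) (M2, mk2) ->
  forall i j, (isa_step r (M1, mk1)).2 i j != 0%N -> M1 i j = M2 i j.
Proof.
move=> r0 [sw1 sw2 _ E sim] i j; rewrite /= in sw1 sw2 E sim.
rewrite isa_step_marks mark_step_neq0 // => /orP[old|/andP[_ pr]].
  have [_ _ Ic Ir _] := sw1; have [e /andP[_ lt]] := Ic _ _ old.
  apply: (swept_corner_eq sw1 sw2 E sim); last by right.
  - by rewrite -e leq_add2l ltnW.
  - by move=> p hp; apply: Ir hp old.
have [d _ cf nrp] := isa_new_pivots pr.
apply: (swept_corner_eq sw1 sw2 E sim); last by left.
- by rewrite d.
- by move=> p hp; move: nrp; rewrite (marked_row_has_pivot hp).
Qed.

Lemma connection_mx_swept (b : nat) D (part : 'I_m -> 'I_b.+1) :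
  is_connection_matrix D part -> swept D (@no_marks m) 1.
Proof.
case=> _ _ _ conn; split; rewrite /no_marks // => j _ a ja.
by apply/eqP; apply: contraT => /conn[aj _]; lia.
Qed.

Lemma isa_rca_inv_all (b : nat) D (part : 'I_m -> 'I_b.+1) :
  is_connection_matrix D part -> forall n, isa_rca_inv n.+1 (isa D n) (rca D n).
Proof.
move=> cm; elim=> [|n IH].
  have sw0 := connection_mx_swept cm.
  by split=> //; exists 1%:M; rewrite ?mul1mx ?mulmx1 //; apply: unitrig1.
move: IH => /=; case: (isa D n) (rca D n) => [M1 mk1] [M2 mk2].
exact: isa_rca_inv_step.
Qed.

End Sweeping.

Unset Implicit Arguments. Set Strict Implicit. Set Printing Implicit Defensive.

Theorem mainTheorem15 (F : fieldType) (m b : nat) (D : 'M[F]_m)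
    (part : 'I_m -> 'I_b.+1) :
  is_connection_matrix D part ->
  forall r : nat, (1 <= r <= m - 1)%N ->
    (forall i j : 'I_m,
        (isa_marks D r i j == r) = (rca_marks D r i j == r)) /\
    (forall i j : 'I_m, isa_marks D r i j != 0%N ->
        isa_mx D r i j = rca_mx D r i j).
Proof.
move=> cm [//|n] _; have := isa_rca_inv_all cm n.
rewrite /isa_marks /rca_marks /isa_mx /rca_mx /=.
case: (isa D n) (rca D n) => [M1 mk1] [M2 mk2] inv; split=> i j.
- by rewrite (isa_rca_marks_step inv).
- by move=> /(isa_rca_marked_entry (ltn0Sn n) inv).
Qed.
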